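(* Let $P$ be the program NQUEENS. Then $\mathcal{M}_P\subseteq S$; that is, NQUEENS is correct with respect to $S=S_{pq}\cup S_{pqs}$. In fact $S$ is a Herbrand model of NQUEENS: for every ground instance $H\gets B_1,\dots,B_n$ ($n\ge0$) of a clause of NQUEENS, if $B_1,\dots,B_n\in S$ then $H\in S$.
   Context: Terms are built over a fixed alphabet containing the constant $0$, the unary symbol $s$, the list constant $[\,]$ and the binary list constructor $[\cdot|\cdot]$; $\mathcal{HU}$ is the set of ground terms and $\mathcal{HB}$ the set of ground atoms. A natural number $i$ is identified with the term $s^i(0)$. Prolog list notation is used: $[e_1,\dots,e_n|e]$ stands for $e$ when $n=0$, and a list of length $n$ is a term $[e_1,\dots,e_n]$. A term $e$ is the $k$-th member of a term $t$ ($k\ge 1$) if $t=[e_1,\dots,e_{k-1},e|e']$ for some terms $e_1,\dots,e_{k-1},e'$; $e$ is a member of $t$ if it is its $k$-th member for some $k$. A list of distinct members is a list whose elements are pairwise distinct. The program NQUEENS consists of the definite clauses (capitalized names are variables): (C1) $pqs(0,X_1,X_2,X_3)$. (C2) $pqs(s(I),Cs,Us,[X|Ds]) \gets pqs(I,Cs,[Y|Us],Ds),\ pq(s(I),Cs,Us,Ds)$. (C3) $pq(I,[I|X_1],[I|X_2],[I|X_3])$. (C4) $pq(I,[X_1|Cs],[X_2|Us],[X_3|Ds]) \gets pq(I,Cs,Us,Ds)$. $\mathcal{M}_P$ denotes the least Herbrand model of a program $P$. If a number $j$ is the $k$-th member of a list $cs$, the up-diagonal number of $j$ w.r.t. $i$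 in $cs$ is $k+j-i$ and the down-diagonal number is $k+i-j$. A triple $(cs,us,ds)$ of terms is correct up to $m$ w.r.t. $i$ when $0\le m\le i$ and: $cs$ is a list of distinct members and each $j\in\{1,\dots,m\}$ is a member of $cs$; the up-diagonal numbers of $1,\dots,m$ in $cs$ are pairwise distinct, and likewise the down-diagonal numbers; and for each $j\in\{1,\dots,m\}$, if the up-diagonal (resp. down-diagonal) number of $j$ w.r.t. $i$ in $cs$ is $l>0$, then the $l$-th member of $us$ (resp. $ds$) is $j$. Specifications: $S_{pq}=\{pq(i,[c_1,\dots,c_k,i|c],[u_1,\dots,u_k,i|u],[d_1,\dots,d_k,i|d])\in\mathcal{HB}\mid k\ge0\}$; $S_{pqs}=\{pqs(0,cs,us,ds)\mid cs,us,ds\in\mathcal{HU}\}\cup\{pqs(i,cs,us,[t|ds])\in\mathcal{HB}\mid i>0$ a natural number, $1,\dots,i$ are members of $cs$, and if $cs$ is a list of distinct members then $(cs,us,ds)$ is correct up to $i$ w.r.t. $i\}$; $S=S_{pq}\cup S_{pqs}$. *)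

From Stdlib Require Import List Arith ZArith Lia.
Import ListNotations.

Inductive term : Type :=
| Zero : term
| Succ : term -> term
| Nil : term
| Cons : term -> term -> term.

Inductive atom : Type :=
| PQS : term -> term -> term -> term -> atom
| PQ  : term -> term -> term -> term -> atom.

Fixpoint nat_term (i : nat) : term :=
  match i with O => Zero | S n => Succ (nat_term n) end.

(* Prolog list notation [e1,...,en | e] *)
Definition lst (es : list term) (e : term) : term := fold_right Cons e es.

Definition kth_member (e : term) (k : nat) (t : term) : Prop :=
  1 <= k /\ exists (es : list term) (e' : term),
    length es = k - 1 /\ t = lst (es ++ [e]) e'.

Definition member (e t : term) : Prop := exists k, kth_member e k t.

Definition distinct_list (t : term) : Prop :=
  exists es : list term, t = lst es Nil /\ NoDup es.

Definition updiag (cs : term) (i j : nat) (l : Z) : Prop :=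
  exists k, kth_member (nat_term j) k cs /\
            l = (Z.of_nat k + Z.of_nat j - Z.of_nat i)%Z.
Definition downdiag (cs : term) (i j : nat) (l : Z) : Prop :=
  exists k, kth_member (nat_term j) k cs /\
            l = (Z.of_nat k + Z.of_nat i - Z.of_nat j)%Z.

Definition correct_upto (cs us ds : term) (m i : nat) : Prop :=
  m <= i /\
  distinct_list cs /\
  (forall j, 1 <= j <= m -> member (nat_term j) cs) /\
  (forall j1 j2 l1 l2, 1 <= j1 <= m -> 1 <= j2 <= m -> j1 <> j2 ->
     updiag cs i j1 l1 -> updiag cs i j2 l2 -> l1 <> l2) /\
  (forall j1 j2 l1 l2, 1 <= j1 <= m -> 1 <= j2 <= m -> j1 <> j2 ->
     downdiag cs i j1 l1 -> downdiag cs i j2 l2 -> l1 <> l2) /\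
  (forall j l, 1 <= j <= m -> updiag cs i j l -> (0 < l)%Z ->
     kth_member (nat_term j) (Z.to_nat l) us) /\
  (forall j l, 1 <= j <= m -> downdiag cs i j l -> (0 < l)%Z ->
     kth_member (nat_term j) (Z.to_nat l) ds).

(* Ground instances H <- B of the clauses of NQUEENS *)
Inductive ground_clause : atom -> list atom -> Prop :=
| gC1 : forall x1 x2 x3, ground_clause (PQS Zero x1 x2 x3) []
| gC2 : forall i cs us x ds y,
    ground_clause (PQS (Succ i) cs us (Cons x ds))
                  [PQS i cs (Cons y us) ds; PQ (Succ i) cs us ds]
| gC3 : forall i x1 x2 x3,
    ground_clause (PQ i (Cons i x1) (Cons i x2) (Cons i x3)) []
| gC4 : forall i x1 cs x2 us x3 ds,
    ground_clause (PQ i (Cons x1 cs) (Cons x2 us) (Cons x3 ds)) [PQ i cs us ds].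

(* Herbrand interpretations as predicates on HB; Herbrand models of NQUEENS *)
Definition is_model (I : atom -> Prop) : Prop :=
  forall H B, ground_clause H B -> (forall b, In b B -> I b) -> I H.

(* least Herbrand model M_P : intersection of all Herbrand models *)
Definition least_model (a : atom) : Prop :=
  forall I, is_model I -> I a.

Definition S_pq (a : atom) : Prop :=
  match a with
  | PQ i c0 u0 d0 =>
      exists (cs us ds : list term) (c u d : term),
        length cs = length us /\ length us = length ds /\
        c0 = lst cs (Cons i c) /\ u0 = lst us (Cons i u) /\ d0 = lst ds (Cons i d)
  | PQS _ _ _ _ => False
  end.

Definition S_pqs (a : atom) : Prop :=
  match a with
  | PQS i0 cs us ds0 =>
      i0 = Zero \/
      exists (i : nat) (t ds : term),
        i0 = nat_term i /\ 0 < i /\ ds0 = Cons t ds /\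
        (forall j, 1 <= j <= i -> member (nat_term j) cs) /\
        (distinct_list cs -> correct_upto cs us ds i i)
  | PQ _ _ _ _ => False
  end.

Definition S_spec (a : atom) : Prop := S_pq a \/ S_pqs a.

(* It suffices to show that S is a Herbrand model of NQUEENS: the least
   Herbrand model is contained in every model.  Clauses C1, C3 and C4 are
   immediate.  An atom pq(i,cs,us,ds) of S_pq says that i occupies one common
   position p in the lists cs, us and ds.  The substance lies in clause C2:
   from the correctness of (cs,[y|us],ds') up to m w.r.t. m and the fact that
   m+1 sits at the common position p of cs, us and [t|ds'], we derive the
   correctness of (cs,us,[t|ds']) up to m+1 w.r.t. m+1.  Passing from row m
   to row m+1 shifts every up-diagonal number by -1 and every down-diagonal
   number by +1, so the old queens remain correctly recorded in us and
   [t|ds']; the new queen has both diagonal numbers equal to p.  Distinctness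
   of diagonal numbers then follows from the recording itself: two queens with
   the same positive number would be the same member of us (resp. [t|ds']),
   while non-positive numbers belong to old queens only. *)

From Stdlib Require Import List Arith ZArith Lia.
Import ListNotations.

Lemma nat_term_inj (a b : nat) : nat_term a = nat_term b -> a = b.
Proof.
  revert b; induction a as [|a IH]; intros [|b] H; simpl in H;
    try discriminate; auto.
  injection H as H. f_equal. exact (IH b H).
Qed.

(* The k-th member of a term, computed: the executable counterpart of
   [kth_member], used to prove its structural properties. *)
Fixpoint lookup (k : nat) (t : term) : option term :=
  match t with
  | Cons a t' => match k with 0 => None | 1 => Some a | S k' => lookup k' t' end
  | _ => None
  end.

Lemma kth_member_lookup (e : term) (k : nat) (t : term) :
  kth_member e k t <-> lookup k t = Some e.
Proof.
  split.
  - intros [Hk [es [e' [Hlen ->]]]].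
    replace k with (S (length es)) by lia. clear.
    induction es as [|a es IH]; [reflexivity|].
    destruct es; exact IH.
  - revert t; induction k as [|k IH]; intros [|t0| |t1 t2] H; try discriminate.
    destruct k as [|k].
    + injection H as ->. split; [lia|]. exists [], t2. auto.
    + destruct (IH t2 H) as [_ [es [e' [Hlen Ht]]]].
      split; [lia|]. exists (t1 :: es), e'. simpl. rewrite Ht. split; [lia|reflexivity].
Qed.

Lemma kth_member_functional (e1 e2 : term) (k : nat) (t : term) :
  kth_member e1 k t -> kth_member e2 k t -> e1 = e2.
Proof.
  rewrite !kth_member_lookup. intros H1 H2. rewrite H1 in H2. now injection H2.
Qed.

Lemma kth_member_cons (e a : term) (k : nat) (t : term) :
  1 <= k -> kth_member e (S k) (Cons a t) <-> kth_member e k t.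
Proof.
  intros Hk. rewrite !kth_member_lookup. destruct k; [lia|reflexivity].
Qed.

Lemma kth_member_lst (es : list term) (x c : term) :
  kth_member x (S (length es)) (lst es (Cons x c)).
Proof.
  split; [lia|]. exists es, c. split; [lia|].
  unfold lst. rewrite fold_right_app. reflexivity.
Qed.

Lemma kth_member_is_cons (e : term) (k : nat) (t : term) :
  kth_member e k t -> exists a t', t = Cons a t'.
Proof.
  intros [_ [[|a es] [e' [_ ->]]]]; eexists; eexists; reflexivity.
Qed.

Lemma lookup_in (es : list term) (k : nat) (e : term) :
  lookup k (lst es Nil) = Some e -> In e es.
Proof.
  revert k; induction es as [|a es IH]; intros [|[|k]] H; simpl in H;
    try discriminate.
  - injection H as ->. now left.
  - right. exact (IH (S k) H).
Qed.

Lemma kth_member_distinct (e : term) (k1 k2 : nat) (t : term) :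
  distinct_list t -> kth_member e k1 t -> kth_member e k2 t -> k1 = k2.
Proof.
  intros [es [-> Hnodup]]. rewrite !kth_member_lookup. revert k1 k2.
  induction Hnodup as [|a es Hnotin Hnodup IH];
    intros [|[|k1]] [|[|k2]] H1 H2; simpl in H1, H2; try discriminate; auto.
  - injection H1 as ->. destruct Hnotin. exact (lookup_in es (S k2) e H2).
  - injection H2 as ->. destruct Hnotin. exact (lookup_in es (S k1) e H1).
Qed.

Lemma members_extend (cs : term) (m p : nat) :
  (forall j, 1 <= j <= m -> member (nat_term j) cs) ->
  kth_member (nat_term (S m)) p cs ->
  forall j, 1 <= j <= S m -> member (nat_term j) cs.
Proof.
  intros Hmem Hp j Hj.
  destruct (Nat.eq_dec j (S m)) as [->|Hne]; [now exists p|].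
  apply Hmem; lia.
Qed.

Lemma updiag_shift (cs : term) (i j : nat) (l : Z) :
  updiag cs (S i) j l <-> updiag cs i j (l + 1).
Proof. split; intros [k [K E]]; exists k; split; auto; lia. Qed.

Lemma downdiag_shift (cs : term) (i j : nat) (l : Z) :
  downdiag cs (S i) j l <-> downdiag cs i j (l - 1).
Proof. split; intros [k [K E]]; exists k; split; auto; lia. Qed.

Lemma updiag_value (cs : term) (i j p : nat) (l : Z) :
  distinct_list cs -> kth_member (nat_term j) p cs -> updiag cs i j l ->
  l = (Z.of_nat p + Z.of_nat j - Z.of_nat i)%Z.
Proof.
  intros Hd Hp [k [K ->]].
  now rewrite (kth_member_distinct _ _ _ _ Hd K Hp).
Qed.

Lemma downdiag_value (cs : term) (i j p : nat) (l : Z) :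
  distinct_list cs -> kth_member (nat_term j) p cs -> downdiag cs i j l ->
  l = (Z.of_nat p + Z.of_nat i - Z.of_nat j)%Z.
Proof.
  intros Hd Hp [k [K ->]].
  now rewrite (kth_member_distinct _ _ _ _ Hd K Hp).
Qed.

(* Distinctness of diagonal numbers from their recording in a list: if every
   positive number of a queen j names the position of j in [board], then two
   queens never share a positive number; if moreover the new queen m+1 has a
   positive number, non-positive numbers can only clash among queens 1..m. *)
Lemma diagonals_distinct (diag : nat -> Z -> Prop) (board : term) (m p : nat) :
  1 <= p ->
  (forall l, diag (S m) l -> l = Z.of_nat p) ->
  (forall j l, 1 <= j <= S m -> diag j l -> (0 < l)%Z ->
     kth_member (nat_term j) (Z.to_nat l) board) ->
  (forall j1 j2 l1 l2, 1 <= j1 <= m -> 1 <= j2 <= m -> j1 <> j2 ->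
     diag j1 l1 -> diag j2 l2 -> l1 <> l2) ->
  forall j1 j2 l1 l2, 1 <= j1 <= S m -> 1 <= j2 <= S m -> j1 <> j2 ->
    diag j1 l1 -> diag j2 l2 -> l1 <> l2.
Proof.
  intros Hp Hnew Hrecorded Hold j1 j2 l1 l2 H1 H2 Hne D1 D2 <-.
  destruct (Z_lt_le_dec 0 l1) as [Hpos|Hnonpos].
  - apply Hne, nat_term_inj.
    exact (kth_member_functional _ _ _ _
             (Hrecorded j1 l1 H1 D1 Hpos) (Hrecorded j2 l1 H2 D2 Hpos)).
  - assert (j1 <> S m) by (intros ->; apply Hnew in D1; lia).
    assert (j2 <> S m) by (intros ->; apply Hnew in D2; lia).
    exact (Hold j1 j2 l1 l1 ltac:(lia) ltac:(lia) Hne D1 D2 eq_refl).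
Qed.

(* Placing queen m+1 at position p: the extension step behind clause C2. *)
Section AddQueen.

Variables (cs us t ds y : term) (m p : nat).
Hypothesis cs_distinct : distinct_list cs.
Hypothesis cs_at_p : kth_member (nat_term (S m)) p cs.
Hypothesis us_at_p : kth_member (nat_term (S m)) p us.
Hypothesis ds_at_p : kth_member (nat_term (S m)) p (Cons t ds).
Hypothesis correct_before : correct_upto cs (Cons y us) ds m m.

Lemma new_queen_updiag (l : Z) : updiag cs (S m) (S m) l -> l = Z.of_nat p.
Proof. intros D. rewrite (updiag_value _ _ _ _ _ cs_distinct cs_at_p D). lia. Qed.

Lemma new_queen_downdiag (l : Z) : downdiag cs (S m) (S m) l -> l = Z.of_nat p.
Proof. intros D. rewrite (downdiag_value _ _ _ _ _ cs_distinct cs_at_p D). lia. Qed.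

Lemma updiag_recorded (j : nat) (l : Z) :
  1 <= j <= S m -> updiag cs (S m) j l -> (0 < l)%Z ->
  kth_member (nat_term j) (Z.to_nat l) us.
Proof.
  intros Hj D Hl.
  destruct (Nat.eq_dec j (S m)) as [->|Hne].
  - rewrite (new_queen_updiag l D), Nat2Z.id. exact us_at_p.
  - destruct correct_before as (_ & _ & _ & _ & _ & up_old & _).
    apply updiag_shift in D.
    pose proof (up_old j (l + 1)%Z ltac:(lia) D ltac:(lia)) as K.
    replace (Z.to_nat (l + 1)) with (S (Z.to_nat l)) in K by lia.
    exact (proj1 (kth_member_cons _ y (Z.to_nat l) us ltac:(lia)) K).
Qed.

Lemma downdiag_recorded (j : nat) (l : Z) :
  1 <= j <= S m -> downdiag cs (S m) j l -> (0 < l)%Z ->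
  kth_member (nat_term j) (Z.to_nat l) (Cons t ds).
Proof.
  intros Hj D Hl.
  destruct (Nat.eq_dec j (S m)) as [->|Hne].
  - rewrite (new_queen_downdiag l D), Nat2Z.id. exact ds_at_p.
  - destruct correct_before as (_ & _ & _ & _ & _ & _ & down_old).
    (* an old queen lies strictly below row m+1, so l >= 2 *)
    assert (Hl2 : (2 <= l)%Z) by (destruct D as [k [[Hk _] ->]]; lia).
    apply downdiag_shift in D.
    pose proof (down_old j (l - 1)%Z ltac:(lia) D ltac:(lia)) as K.
    replace (Z.to_nat l) with (S (Z.to_nat (l - 1))) by lia.
    apply kth_member_cons; [lia|exact K].
Qed.

Lemma correct_upto_succ : correct_upto cs us (Cons t ds) (S m) (S m).
Proof.
  destruct correct_before as (_ & _ & members_old & up_old & down_old & _ & _).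
  pose proof (proj1 cs_at_p) as Hp.
  split; [lia|]. split; [exact cs_distinct|].
  split; [exact (members_extend cs m p members_old cs_at_p)|].
  split.
  { apply (diagonals_distinct _ us m p Hp new_queen_updiag updiag_recorded).
    intros j1 j2 l1 l2 H1 H2 Hne D1 D2 E.
    rewrite updiag_shift in D1, D2.
    exact (up_old j1 j2 _ _ ltac:(lia) ltac:(lia) Hne D1 D2 ltac:(lia)). }
  split.
  { apply (diagonals_distinct _ (Cons t ds) m p Hp new_queen_downdiag downdiag_recorded).
    intros j1 j2 l1 l2 H1 H2 Hne D1 D2 E.
    rewrite downdiag_shift in D1, D2.
    exact (down_old j1 j2 _ _ ltac:(lia) ltac:(lia) Hne D1 D2 ltac:(lia)). }
  split; [exact updiag_recorded | exact downdiag_recorded].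
Qed.

End AddQueen.

Lemma correct_upto_zero (cs us ds : term) :
  distinct_list cs -> correct_upto cs us ds 0 0.
Proof. intros Hd. repeat split; intros; auto; lia. Qed.

Lemma S_pq_position (i cs us ds : term) :
  S_pq (PQ i cs us ds) ->
  exists p, kth_member i p cs /\ kth_member i p us /\ kth_member i p ds.
Proof.
  intros (csl & usl & dsl & c & u & d & L1 & L2 & -> & -> & ->).
  exists (S (length csl)). split; [|split].
  - apply kth_member_lst.
  - rewrite L1. apply kth_member_lst.
  - rewrite L1, L2. apply kth_member_lst.
Qed.

(* An atom pqs(i,cs,us,ds) of S_pqs, read uniformly for i = 0 and i > 0. *)
Lemma S_pqs_inv (i cs us ds : term) :
  S_pqs (PQS i cs us ds) ->
  exists m, i = nat_term m /\
    (forall j, 1 <= j <= m -> member (nat_term j) cs) /\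
    (distinct_list cs -> forall t ds', ds = Cons t ds' -> correct_upto cs us ds' m m).
Proof.
  intros [-> | (m & t0 & ds0 & -> & _ & -> & Hmem & Hcor)].
  - exists 0. split; [reflexivity|]. split; [intros; lia|].
    intros Hd t ds' _. now apply correct_upto_zero.
  - exists m. split; [reflexivity|]. split; [exact Hmem|].
    intros Hd t ds' E. injection E as <- <-. exact (Hcor Hd).
Qed.

Lemma clause2_sound (i cs us x ds y : term) :
  S_pqs (PQS i cs (Cons y us) ds) -> S_pq (PQ (Succ i) cs us ds) ->
  S_pqs (PQS (Succ i) cs us (Cons x ds)).
Proof.
  intros Hpqs Hpq.
  destruct (S_pq_position _ _ _ _ Hpq) as (p & Pc & Pu & Pd).
  destruct (S_pqs_inv _ _ _ _ Hpqs) as (m & -> & Hmem & Hcor).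
  destruct (kth_member_is_cons _ _ _ Pd) as (t & ds' & ->).
  right. exists (S m), x, (Cons t ds').
  split; [reflexivity|]. split; [lia|]. split; [reflexivity|].
  split; [exact (members_extend cs m p Hmem Pc)|].
  intros Hd. exact (correct_upto_succ cs us t ds' y m p Hd Pc Pu Pd (Hcor Hd t ds' eq_refl)).
Qed.

Lemma clause4_sound (i x1 cs x2 us x3 ds : term) :
  S_pq (PQ i cs us ds) -> S_pq (PQ i (Cons x1 cs) (Cons x2 us) (Cons x3 ds)).
Proof.
  intros (csl & usl & dsl & c & u & d & L1 & L2 & -> & -> & ->).
  exists (x1 :: csl), (x2 :: usl), (x3 :: dsl), c, u, d.
  simpl. repeat split; lia.
Qed.

Lemma S_spec_pq (i cs us ds : term) : S_spec (PQ i cs us ds) -> S_pq (PQ i cs us ds).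
Proof. intros [H|[]]. exact H. Qed.

Lemma S_spec_pqs (i cs us ds : term) : S_spec (PQS i cs us ds) -> S_pqs (PQS i cs us ds).
Proof. intros [[]|H]. exact H. Qed.

Lemma S_is_model : is_model S_spec.
Proof.
  intros H B Hclause HB.
  destruct Hclause as [x1 x2 x3 | i cs us x ds y | i x1 x2 x3 | i x1 cs x2 us x3 ds].
  - right. now left.
  - right. apply (clause2_sound i cs us x ds y).
    + apply S_spec_pqs, HB. now left.
    + apply S_spec_pq, HB. right. now left.
  - left. exists [], [], [], x1, x2, x3. auto.
  - left. apply clause4_sound, S_spec_pq, HB. now left.
Qed.

Theorem mainTheorem2 :
  (forall a : atom, least_model a -> S_spec a) /\ is_model S_spec.
Proof.
  split.
  - intros a Ha. exact (Ha S_spec S_is_model).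
  - exact S_is_model.
Qed.
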